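(* Let $\zeta:[\sigma,\tau]\to\mathbb R$ be a continuous, strictly increasing, Lipschitz function with $\zeta(\sigma)=0$, and let $F\subset[\sigma,\tau]$ be closed with $\sigma,\tau\in F$ and $\lambda(F)=0$. Then $\lambda(\sqrt{\zeta}(F))=0$, where $\sqrt{\zeta}(x):=\sqrt{\zeta(x)}$ for $x\in[\sigma,\tau]$.
   Context: $\lambda$ denotes Lebesgue measure on $\mathbb R$. *)

From HB Require Import structures.
From mathcomp Require Import all_boot all_order all_algebra.
From mathcomp Require Import all_classical all_reals all_analysis.

From HB Require Import structures.
From mathcomp Require Import all_boot all_order all_algebra.
From mathcomp Require Import all_classical all_reals all_analysis.
From mathcomp Require Import measurable_realfun lra ring.
Import Order.TTheory GRing.Theory Num.Theory.
Import numFieldNormedType.Exports.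

(* sqrt o zeta is Lipschitz on every [c, tau] with sigma < c, because there
   zeta >= zeta c > 0 and sqrt is Lipschitz on [zeta c, +oo[.  Lipschitz maps
   send Lebesgue-null sets to null sets, and F is covered by sigma together with
   the countably many pieces F `&` [sigma + 1/(n+1), tau]; so the image is a
   point plus a countable union of null sets. *)

Set Implicit Arguments.
Unset Strict Implicit.
Unset Printing Implicit Defensive.

Local Open Scope classical_set_scope.
Local Open Scope ring_scope.

Lemma lipschitz_comp (K : realFieldType) (U V W : normedModType K)
    (f : U -> V) (g : V -> W) (A : set U) (B : set V) :
  f @` A `<=` B -> [lipschitz f x | x in A] -> [lipschitz g y | y in B] ->
  [lipschitz g (f x) | x in A].
Proof.
move=> fAB /pinfty_ex_gt0[k1 k1_gt0 f_lip] /pinfty_ex_gt0[k2 k2_gt0 g_lip].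
rewrite /lipschitz_on; near=> M => -[x y] [/= Ax Ay].
have fAB2 : (B `*` B) (f x, f y) by split; apply: fAB; exact: imageP.
apply: le_trans (g_lip (f x, f y) fAB2) _.
apply: le_trans (ler_wpM2l (ltW k2_gt0) (f_lip (x, y) (conj Ax Ay))) _.
rewrite mulrA; apply: ler_wpM2r; first exact: normr_ge0.
near: M; apply: nbhs_pinfty_ge; exact: num_real.
Unshelve. all: by end_near.
Qed.

Lemma ler_dist_sqrt (R : rcfType) (m x y : R) : 0 < m -> m <= x -> m <= y ->
  `|Num.sqrt x - Num.sqrt y| <= (Num.sqrt m)^-1 * `|x - y|.
Proof.
move=> m_gt0 mx my.
have x_ge0 : 0 <= x by rewrite (le_trans (ltW m_gt0)).
have y_ge0 : 0 <= y by rewrite (le_trans (ltW m_gt0)).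
have sqrtm_gt0 : 0 < Num.sqrt m by rewrite sqrtr_gt0.
have -> : x - y = (Num.sqrt x - Num.sqrt y) * (Num.sqrt x + Num.sqrt y).
  by rewrite mulrDr !mulrBl -!expr2 !sqr_sqrtr //; ring.
rewrite normrM [`|_ + Num.sqrt y|]ger0_norm ?addr_ge0 ?sqrtr_ge0 // mulrCA.
rewrite ler_peMr // ler_pdivlMl // mulr1.
by apply: le_trans (ler_wsqrtr mx) _; rewrite lerDl sqrtr_ge0.
Qed.

Lemma sqrtr_lipschitz_ge (R : rcfType) (m : R) : 0 < m ->
  [lipschitz Num.sqrt x | x in [set x | m <= x]].
Proof.
move=> m_gt0; rewrite /lipschitz_on; near=> M => -[x y] [/= mx my].
apply: le_trans (ler_dist_sqrt m_gt0 mx my) _.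
apply: ler_wpM2r; first exact: normr_ge0.
near: M; apply: nbhs_pinfty_ge; exact: num_real.
Unshelve. all: by end_near.
Qed.

Section lebesgue_null_sets.
Context {R : realType}.
Local Notation mu := (@lebesgue_measure R).
Local Notation l := (@wlength R idfun).

Let lebesgue_measure_outerE (A : set R) : mu A = (l^* A)%mu.
Proof. by []. Qed.

Lemma le_lebesgue_measure : {homo mu : A B / A `<=` B >-> (A <= B)%E}.
Proof.
by move=> A B AB; rewrite !lebesgue_measure_outerE; exact: le_outer_measure.
Qed.

Lemma lebesgue_measure_subset_null (A B : set R) :
  A `<=` B -> mu B = 0%E -> mu A = 0%E.
Proof.
move=> AB B0; apply/eqP; rewrite eq_le measure_ge0 andbT -B0.
exact: le_lebesgue_measure.
Qed.

Lemma lebesgue_measureU_null (A B : set R) :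
  mu A = 0%E -> mu B = 0%E -> mu (A `|` B) = 0%E.
Proof.
move=> A0 B0; apply/eqP; rewrite eq_le measure_ge0 andbT.
have : (mu (A `|` B) <= mu A + mu B)%E by exact: outer_measureU2.
by rewrite A0 B0 adde0.
Qed.

Lemma lebesgue_measure_bigcup_null (A : (set R)^nat) :
  (forall n, mu (A n) = 0%E) -> mu (\bigcup_n A n) = 0%E.
Proof.
move=> A0; apply/eqP; rewrite eq_le measure_ge0 andbT.
have : (mu (\bigcup_n A n) <= \sum_(n <oo) mu (A n))%E.
  exact: outer_measure_sigma_subadditive.
by rewrite eseries0 // => n _ _; exact: A0.
Qed.

Section lipschitz_image.
Variables (A : set R) (g : R -> R) (k : R).
Hypotheses (k_gt0 : 0 < k) (g_lip : k.-lipschitz_A g).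

Lemma lebesgue_measure_image_itv_le (a b : R) :
  (mu (g @` (`]a, b[ `&` A)) <= (2 * k)%:E * l `]a, b[)%E.
Proof.
have [[x0 [abx0 Ax0]]|noA] := pselect (exists x, (`]a, b[ `&` A) x); last first.
  suff -> : g @` (`]a, b[ `&` A) = set0.
    by rewrite measure0 mule_ge0 ?wlength_ge0 // lee_fin mulr_ge0 // ltW.
  by apply/seteqP; split => // y [x ? _]; apply: noA; exists x.
move: (abx0); rewrite /= in_itv /= => /andP[ax0 x0b].
have ab : a < b by exact: lt_trans ax0 x0b.
pose r := k * (b - a).
have gab : g @` (`]a, b[ `&` A) `<=` `[g x0 - r, g x0 + r].
  move=> _ [x [abx Ax] <-]; move: abx; rewrite /= in_itv /= => /andP[ax xb].
  have : `|g x - g x0| <= r.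
    apply: le_trans (@g_lip (x, x0) (conj Ax Ax0)) _.
    by rewrite /= ler_pM2l // ler_norml; apply/andP; split; lra.
  by rewrite ler_norml in_itv /= => /andP[? ?]; apply/andP; split; lra.
apply: le_trans (le_lebesgue_measure gab) _.
have r_gt0 : 0 < r by rewrite mulr_gt0 // subr_gt0.
rewrite lebesgue_measure_itv wlength_itv /= !lte_fin ab ltrD2l gtrN //.
by rewrite -!EFinB -EFinM lee_fin /r; lra.
Qed.

End lipschitz_image.

Lemma lebesgue_measure_image_lipschitz_null (A D : set R) (g : R -> R) :
  [lipschitz g x | x in A] -> D `<=` A -> mu D = 0%E -> mu (g @` D) = 0%E.
Proof.
move=> /pinfty_ex_gt0[k k_gt0 g_lip] DA D0.
apply/eqP; rewrite eq_le measure_ge0 andbT.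
apply/lee_addgt0Pr => e e_gt0; rewrite add0e.
have ek_gt0 : 0 < e / (2 * k) by rewrite divr_gt0 // mulr_gt0.
have : (l^* D)%mu \is a fin_num by rewrite -lebesgue_measure_outerE D0.
rewrite outer_measure_open_itv_cover => /(lb_ereal_inf_adherent ek_gt0).
move=> [_ [I [Iitv DI] <-]]; rewrite -outer_measure_open_itv_cover.
rewrite -lebesgue_measure_outerE D0 add0e => Ie.
have gDI : g @` D `<=` \bigcup_n g @` (I n `&` D).
  by move=> _ [x Dx <-]; have [n _ Inx] := DI x Dx; exists n => //; exists x.
apply: le_trans (le_lebesgue_measure gDI) _.
apply: le_trans (_ : _ <= \sum_(n <oo) mu (g @` (I n `&` D)))%E _.
  exact: outer_measure_sigma_subadditive.
apply: le_trans (_ : _ <= \sum_(n <oo) (2 * k)%:E * l (I n))%E _.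
  apply: lee_nneseries => [n _ _|n _]; first exact: measure_ge0.
  have [[a b] /= ->] := Iitv n.
  apply: le_trans (lebesgue_measure_image_itv_le k_gt0 g_lip a b).
  by apply: le_lebesgue_measure; apply: image_subset; exact: setIS.
rewrite nneseriesZl; last by move=> n _; exact: wlength_ge0.
apply: le_trans (_ : _ <= (2 * k)%:E * (e / (2 * k))%:E)%E _.
  by rewrite lee_pmul2l ?ltW // lte_fin mulr_gt0.
by rewrite -EFinM lee_fin mulrCA divff ?mulr1 // gt_eqF // mulr_gt0.
Qed.

Lemma lebesgue_measure_image_null_lipschitz_off_left (sigma tau : R)
    (g : R -> R) (D : set R) :
  (forall c, sigma < c <= tau -> [lipschitz g x | x in `[c, tau]]) ->
  D `<=` `[sigma, tau] -> mu D = 0%E -> mu (g @` D) = 0%E.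
Proof.
move=> g_lip Dst D0.
pose Dn n := D `&` `[sigma + n.+1%:R^-1, tau].
have Dcover : g @` D `<=` [set g sigma] `|` \bigcup_n g @` Dn n.
  move=> _ [x Dx <-]; have := Dst _ Dx; rewrite /= in_itv /= => /andP[].
  rewrite le_eqVlt => /predU1P[->|/ltr_add_invr[n snx] xt]; first by left.
  by right; exists n => //; exists x => //; split; rewrite //= in_itv /= xt ltW.
apply: lebesgue_measure_subset_null Dcover _.
apply: lebesgue_measureU_null; first exact: lebesgue_measure_set1.
apply: lebesgue_measure_bigcup_null => n.
have [snt|tsn] := leP (sigma + n.+1%:R^-1) tau; last first.
  by rewrite /Dn set_itv_ge ?setI0 ?image_set0 ?measure0 // bnd_simp -ltNge.
apply: lebesgue_measure_image_lipschitz_null (g_lip (sigma + n.+1%:R^-1) _) _ _.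
- by rewrite snt andbT ltrDl invr_gt0 ltr0n.
- exact: subIsetr.
- exact: lebesgue_measure_subset_null (@subIsetl _ _ _) D0.
Qed.

End lebesgue_null_sets.

Lemma sqrt_comp_lipschitz_off_left (R : realType) (sigma tau c : R)
    (zeta : R -> R) :
  {in `[sigma, tau] &, forall x y, x < y -> zeta x < zeta y} ->
  [lipschitz zeta x | x in `[sigma, tau]] -> zeta sigma = 0 ->
  sigma < c <= tau -> [lipschitz Num.sqrt (zeta x) | x in `[c, tau]].
Proof.
move=> zeta_incr zeta_lip zeta_sigma /andP[sc ct].
have cst : `[c, tau] `<=` `[sigma, tau].
  by apply: subset_itvr; rewrite bnd_simp ltW.
have c_in : c \in `[sigma, tau] by rewrite in_itv /= ct ltW.
have zeta_c_gt0 : 0 < zeta c.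
  by rewrite -zeta_sigma zeta_incr // in_itv /= lexx (le_trans (ltW sc)).
apply: lipschitz_comp (sqrtr_lipschitz_ge zeta_c_gt0).
- move=> _ [x cx <-]; move: (cx); rewrite /= in_itv /= => /andP[].
  rewrite le_eqVlt => /predU1P[-> //|cx' _].
  by apply/ltW/zeta_incr => //; rewrite inE; exact: cst.
- apply: sub_lipschitz zeta_lip => P + [x y] [cx cy].
  by apply; split; exact: cst.
Qed.

Theorem lemma3p2 (R : realType) (sigma tau : R) (zeta : R -> R) (F : set R) :
  {within `[sigma, tau], continuous zeta} ->
  {in `[sigma, tau] &, forall x y, x < y -> zeta x < zeta y} ->
  [lipschitz zeta x | x in `[sigma, tau]] ->
  zeta sigma = 0 ->
  closed F -> F `<=` `[sigma, tau] -> F sigma -> F tau ->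
  (lebesgue_measure F = 0)%E ->
  (lebesgue_measure [set Num.sqrt (zeta x) | x in F] = 0)%E.
Proof.
move=> _ zeta_incr zeta_lip zeta_sigma _ F_sub _ _ F0.
apply: lebesgue_measure_image_null_lipschitz_off_left F_sub F0 => c.
exact: sqrt_comp_lipschitz_off_left.
Qed.
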